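(* Let $A\subseteq B\subseteq C$ be extensions of commutative rings. Then there is an exact sequence of abelian groups $$0\longrightarrow \mathfrak{C}(A,B)\longrightarrow \mathfrak{C}(A,C)\longrightarrow \mathfrak{C}(B,C),$$ where the first map is induced by the inclusion $\mathscr{G}(A,B)\subseteq \mathscr{G}(A,C)$ and the second map is induced by $L\mapsto LB$.
   Context: All rings are commutative with identity. For an extension of rings $R\subseteq S$ and $R$-submodules $L,L'$ of $S$, $LL'$ denotes the $R$-submodule of $S$ of all finite sums $\sum x_ky_k$ with $x_k\in L$, $y_k\in L'$. An $R$-submodule $L$ of $S$ is an invertible ideal of the extension $R\subseteq S$ if $LL'=R$ for some $R$-submodule $L'$ of $S$. These form an abelian group $\mathscr{G}(R,S)$ under multiplication with identity $R$, and $\mathfrak{C}(R,S)=\mathscr{G}(R,S)/\{Rx: x\in S^\ast\}$ is the ideal class group of the extension ($S^\ast$ the unit group of $S$). *)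

From mathcomp Require Import all_boot all_algebra.
Set Implicit Arguments. Unset Strict Implicit. Unset Printing Implicit Defensive.
Import GRing.Theory.
Local Open Scope ring_scope.

Section Defs.
Variable C : comPzRingType.

Definition subring (A : C -> Prop) : Prop :=
  A 1 /\ (forall x y, A x -> A y -> A (x - y)) /\ (forall x y, A x -> A y -> A (x * y)).

Definition incl (L M : C -> Prop) : Prop := forall x, L x -> M x.

Definition submod (A L : C -> Prop) : Prop :=
  L 0 /\ (forall x y, L x -> L y -> L (x + y)) /\ (forall a x, A a -> L x -> L (a * x)).

Definition setmul (L M : C -> Prop) : C -> Prop :=
  fun z => exists s : seq (C * C),
    (forall p, p \in s -> L p.1 /\ M p.2) /\ z = \sum_(p <- s) p.1 * p.2.

Definition invertible (A S L : C -> Prop) : Prop :=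
  submod A L /\ incl L S /\
  exists L', submod A L' /\ incl L' S /\ setmul L L' = A.

Definition sunit (S : C -> Prop) (x : C) : Prop :=
  S x /\ exists y, S y /\ x * y = 1.

Definition principal (A : C -> Prop) (x : C) : C -> Prop :=
  fun z => exists a, A a /\ z = a * x.

Definition fullset : C -> Prop := fun _ => True.
End Defs.

(* The argument is a calculus of products of submodules of C.  The product is
   associative and commutative, a ring acts as the identity on its modules,
   B B = B, and (A x)(B y) = B (x y) for subrings A ⊆ B.  Hence L |-> L B is
   multiplicative and sends A x to B x.  If L ⊆ B has inverse L' ⊆ B, then
   B = (L L') B = L (L' B) ⊆ L B ⊆ B, so L B = B; if moreover L = A x, then
   1 ∈ L L' ⊆ B x, so x is a unit of B.  Conversely, if L B = B x with x z = 1,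
   then M = L (A z) has inverse L' (A x), both lie in B because
   M ⊆ (L B)(A z) = B and L' (A x) ⊆ L' (L B) = B, and L = M (A x). *)
From mathcomp Require Import all_boot all_algebra.
From Stdlib Require Import FunctionalExtensionality PropExtensionality.
Set Implicit Arguments. Unset Strict Implicit. Unset Printing Implicit Defensive.
Import GRing.Theory.
Local Open Scope ring_scope.

Section SubmoduleProducts.
Variable C : comPzRingType.
Implicit Types (A B S L M N : C -> Prop) (x y z : C).

Lemma incl_refl L : incl L L.
Proof. by []. Qed.

Lemma incl_trans M L N : incl L M -> incl M N -> incl L N.
Proof. by move=> hLM hMN x /hLM /hMN. Qed.

Lemma incl_antisym L M : incl L M -> incl M L -> L = M.
Proof.
move=> hLM hML; apply: functional_extensionality => x.
by apply: propositional_extensionality; split; [apply: hLM | apply: hML].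
Qed.

Section Subring.
Variable S : C -> Prop.
Hypothesis hS : subring S.

Lemma subring1 : S 1.
Proof. by case: hS. Qed.

Lemma subring0 : S 0.
Proof. by case: hS => h1 [hB _]; rewrite -(subrr 1); apply: hB. Qed.

Lemma subringN x : S x -> S (- x).
Proof. by case: hS => _ [hB _] hx; rewrite -sub0r; apply: hB => //; apply: subring0. Qed.

Lemma subringD x y : S x -> S y -> S (x + y).
Proof.
by case: hS => _ [hB _] hx hy; rewrite -(opprK y); apply: hB => //; apply: subringN.
Qed.

Lemma subringM x y : S x -> S y -> S (x * y).
Proof. by case: hS => _ [_ hM]; apply: hM. Qed.

Lemma submod_subring A : incl A S -> submod A S.
Proof.
move=> hAS; split; first exact: subring0.
by split=> [x y|a x /hAS]; [apply: subringD | apply: subringM].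
Qed.

End Subring.

Lemma mem_setmul L M x y : L x -> M y -> setmul L M (x * y).
Proof.
move=> hx hy; exists [:: (x, y)]; split; last by rewrite big_seq1.
by move=> p; rewrite inE => /eqP ->.
Qed.

Lemma setmul0 L M : setmul L M 0.
Proof. by exists [::]; split => //; rewrite big_nil. Qed.

Lemma setmulD L M u v : setmul L M u -> setmul L M v -> setmul L M (u + v).
Proof.
move=> [s [hs ->]] [t [ht ->]]; exists (s ++ t); split; last by rewrite big_cat.
by move=> p; rewrite mem_cat => /orP [] hp; [apply: hs | apply: ht].
Qed.

Lemma setmul_min L M N : N 0 -> (forall u v, N u -> N v -> N (u + v)) ->
  (forall x y, L x -> M y -> N (x * y)) -> incl (setmul L M) N.
Proof.
move=> N0 ND NM u [s [hs ->]].
elim: s hs => [|p s IHs] hs; first by rewrite big_nil.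
have [hp1 hp2] := hs p (mem_head _ _).
rewrite big_cons; apply: ND; first exact: NM.
by apply: IHs => q hq; apply: hs; rewrite in_cons hq orbT.
Qed.

Lemma setmulS L1 L2 M1 M2 :
  incl L1 L2 -> incl M1 M2 -> incl (setmul L1 M1) (setmul L2 M2).
Proof.
move=> hL hM; apply: setmul_min; [exact: setmul0 | exact: setmulD |].
by move=> x y /hL hx /hM hy; apply: mem_setmul.
Qed.

Lemma setmulC L M : setmul L M = setmul M L.
Proof.
suff sub L1 M1 : incl (setmul L1 M1) (setmul M1 L1) by apply: incl_antisym.
apply: setmul_min; [exact: setmul0 | exact: setmulD |].
by move=> x y hx hy; rewrite mulrC; apply: mem_setmul.
Qed.

Lemma setmulA L M N : setmul L (setmul M N) = setmul (setmul L M) N.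
Proof.
have sub L1 M1 N1 : incl (setmul L1 (setmul M1 N1)) (setmul (setmul L1 M1) N1).
  apply: setmul_min; [exact: setmul0 | exact: setmulD |].
  move=> x w hx; apply: (setmul_min (N := fun w => setmul _ _ (x * w)))
    => [|u v|y z hy hz].
  - by rewrite mulr0; apply: setmul0.
  - by rewrite mulrDr; apply: setmulD.
  - by rewrite mulrA; apply: mem_setmul => //; apply: mem_setmul.
apply: incl_antisym; first exact: sub.
rewrite setmulC (setmulC L M); apply: incl_trans (sub N M L) _.
by rewrite setmulC (setmulC N M).
Qed.

Lemma setmulACA L1 M1 L2 M2 :
  setmul (setmul L1 M1) (setmul L2 M2) = setmul (setmul L1 L2) (setmul M1 M2).
Proof.
by rewrite -!setmulA; congr setmul; rewrite !setmulA (setmulC M1 L2).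
Qed.

Lemma submod_setmul_sub A L M : submod A M -> incl L A -> incl (setmul L M) M.
Proof. by case=> M0 [MD MM] hLA; apply: setmul_min => // a x /hLA; apply: MM. Qed.

Lemma setmul_submod A M : A 1 -> submod A M -> setmul A M = M.
Proof.
move=> A1 hM; apply: incl_antisym; first exact: submod_setmul_sub hM (@incl_refl A).
by move=> x hx; rewrite -(mul1r x); apply: mem_setmul.
Qed.

Lemma submod_setmul A L M : submod A M -> submod A (setmul L M).
Proof.
case=> _ [_ MM]; split; first exact: setmul0.
split=> [u v|a w ha]; first exact: setmulD.
apply: (setmul_min (N := fun w => setmul _ _ (a * w))) => [|u v|x y hx hy].
- by rewrite mulr0; apply: setmul0.
- by rewrite mulrDr; apply: setmulD.
- by rewrite mulrCA; apply: mem_setmul => //; apply: MM.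
Qed.

Lemma subring_setmul_sub S L M :
  subring S -> incl L S -> incl M S -> incl (setmul L M) S.
Proof.
move=> hS hL hM; apply: incl_trans (setmulS hL hM) _.
exact: submod_setmul_sub (submod_subring hS (@incl_refl S)) (@incl_refl S).
Qed.

Lemma setmul_subring S : subring S -> setmul S S = S.
Proof. by move=> hS; apply: setmul_submod (subring1 hS) (submod_subring hS _). Qed.

Lemma setmul_distr_subring S L M : subring S ->
  setmul (setmul L M) S = setmul (setmul L S) (setmul M S).
Proof. by move=> hS; rewrite setmulACA setmul_subring. Qed.

Lemma principalS A B x : incl A B -> incl (principal A x) (principal B x).
Proof. by move=> hAB u [a [/hAB hb ->]]; exists a. Qed.

Lemma principal1 B : principal B 1 = B.
Proof.
apply: incl_antisym => [u [b [hb ->]]|b hb]; first by rewrite mulr1.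
by exists b; rewrite mulr1.
Qed.

Lemma submod_principal A x : subring A -> submod A (principal A x).
Proof.
move=> hA; split; first by exists 0; rewrite mul0r; split => //; exact: (subring0 hA).
split=> [u v [a [ha ->]] [b [hb ->]]|a u ha [b [hb ->]]].
  by exists (a + b); rewrite mulrDl; split => //; exact: (subringD hA ha hb).
by exists (a * b); rewrite mulrA; split => //; exact: (subringM hA ha hb).
Qed.

Lemma setmul_principal A B x y : subring A -> subring B -> incl A B ->
  setmul (principal A x) (principal B y) = principal B (x * y).
Proof.
move=> hA hB hAB; apply: incl_antisym.
  case: (@submod_principal B (x * y) hB) => P0 [PD _].
  apply: setmul_min => // _ _ [a [/hAB ha ->]] [b [hb ->]].
  by exists (a * b); rewrite mulrACA; split => //; exact: (subringM hB ha hb).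
move=> _ [b [hb ->]]; rewrite mulrCA -[X in X * (b * y)]mul1r.
by apply: mem_setmul; [exists 1; split => //; exact: (subring1 hA) | exists b].
Qed.

Lemma invertibleS A S T L : incl S T -> invertible A S L -> invertible A T L.
Proof.
move=> hST [hL [hLS [L' [hL' [hL'S e]]]]]; split => //.
split; first exact: incl_trans hST.
by exists L'; split => //; split => //; apply: incl_trans hST.
Qed.

Lemma sunitS S T x : incl S T -> sunit S x -> sunit T x.
Proof. by move=> hST [/hST hx [y [/hST hy e]]]; split => //; exists y. Qed.

Section Extension.
Variables A B : C -> Prop.
Hypotheses (hA : subring A) (hB : subring B) (hAB : incl A B).

Lemma setmul_extension : setmul A B = B.
Proof. exact: setmul_submod (subring1 hA) (submod_subring hB hAB). Qed.

Lemma setmul_principal_extension x : setmul (principal A x) B = principal B x.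
Proof. by rewrite -{1}(@principal1 B) setmul_principal // mulr1. Qed.

Lemma invertible_extension S L : subring S -> incl B S ->
  invertible A S L -> invertible B S (setmul L B).
Proof.
move=> hS hBS [hL [hLS [L' [hL' [hL'S e]]]]].
have hBB := submod_subring hB (@incl_refl B).
split; first exact: submod_setmul.
split; first exact: subring_setmul_sub.
exists (setmul L' B); split; first exact: submod_setmul.
split; first exact: subring_setmul_sub.
by rewrite -setmul_distr_subring // e setmul_extension.
Qed.

Lemma invertible_setmul_extension L : invertible A B L -> setmul L B = B.
Proof.
move=> [hL [hLB [L' [hL' [hL'B e]]]]].
apply: incl_antisym; first exact: subring_setmul_sub.
rewrite -{1}setmul_extension -e -setmulA.
by apply: setmulS => //; apply: subring_setmul_sub.
Qed.

Lemma invertible_principal_sunit L x :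
  invertible A B L -> L = principal A x -> sunit B x.
Proof.
move=> [hL [hLB [L' [hL' [hL'B e]]]]] eL.
have hx : B x.
  by apply: hLB; rewrite eL; exists 1; rewrite mul1r; split => //; exact: (subring1 hA).
have : principal B (x * 1) 1.
  rewrite -(setmul_principal _ _ hA hB hAB) principal1.
  apply: (setmulS (@incl_refl (principal A x)) hL'B).
  by rewrite -eL e; exact: (subring1 hA).
by rewrite mulr1 => -[w [hw e1]]; split => //; exists w; rewrite mulrC.
Qed.

Lemma invertible_principal_descent S L x z : invertible A S L -> x * z = 1 ->
  setmul L B = principal B x ->
  exists2 M, invertible A B M & L = setmul M (principal A x).
Proof.
move=> [hL [_ [L' [hL' [_ e]]]]] xz eLB.
have zx : z * x = 1 by rewrite mulrC.
have hAz := @submod_principal A z hA; have hAx := @submod_principal A x hA.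
have AzAx : setmul (principal A z) (principal A x) = A.
  by rewrite setmul_principal // zx principal1.
have LA : setmul L A = L by rewrite setmulC setmul_submod //; exact: (subring1 hA).
exists (setmul L (principal A z)); last by rewrite -setmulA AzAx LA.
split; first exact: submod_setmul.
split.
  rewrite -(@principal1 B) -zx -(setmul_principal _ _ hA hB hAB) -eLB.
  rewrite [X in incl _ X]setmulC.
  apply: setmulS => // l hl; rewrite -(mulr1 l).
  by apply: mem_setmul => //; exact: (subring1 hB).
exists (setmul L' (principal A x)); split; first exact: submod_setmul.
split; last by rewrite setmulACA e setmulC AzAx setmul_subring.
apply: (@incl_trans (setmul L' (setmul L B))).
  by apply: setmulS => //; rewrite eLB; apply: principalS.
by rewrite setmulA (setmulC L' L) e setmul_extension.
Qed.

End Extension.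
End SubmoduleProducts.

Theorem theorem5p1 (C : comPzRingType) (A B : C -> Prop) :
  subring A -> subring B -> incl A B ->
  (* first map: G(A,B) ⊆ G(A,C), principal ideals of B^* are principal of C^* *)
  (forall L, invertible A B L -> invertible A (@fullset C) L) /\
  (forall x, sunit B x -> sunit (@fullset C) x) /\
  (* second map L |-> LB : G(A,C) -> G(B,C), homomorphism, principal to principal *)
  (forall L, invertible A (@fullset C) L -> invertible B (@fullset C) (setmul L B)) /\
  (forall L M, invertible A (@fullset C) L -> invertible A (@fullset C) M ->
     setmul (setmul L M) B = setmul (setmul L B) (setmul M B)) /\
  (forall x, sunit (@fullset C) x -> setmul (principal A x) B = principal B x) /\
  (* exactness at C(A,B): injectivity of the induced map *)
  (forall L, invertible A B L ->
     forall x, sunit (@fullset C) x -> L = principal A x ->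
     exists y, sunit B y /\ L = principal A y) /\
  (* image ⊆ kernel *)
  (forall L, invertible A B L ->
     exists x, sunit (@fullset C) x /\ setmul L B = principal B x) /\
  (* kernel ⊆ image *)
  (forall L, invertible A (@fullset C) L ->
     forall x, sunit (@fullset C) x -> setmul L B = principal B x ->
     exists M y, invertible A B M /\ sunit (@fullset C) y /\
                 L = setmul M (principal A y)).
Proof.
move=> hA hB hAB.
have hC : subring (@fullset C) by [].
split; first by move=> L; apply: invertibleS.
split; first by move=> x; apply: sunitS.
split; first by move=> L; apply: invertible_extension.
split; first by move=> L M _ _; apply: setmul_distr_subring.
split; first by move=> x _; apply: setmul_principal_extension.
split.
  by move=> L hL x _ eL; exists x; split => //; apply: invertible_principal_sunit eL.
split.
  move=> L hL; exists 1; split; first by split => //; exists 1; rewrite mulr1.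
  by rewrite principal1 (invertible_setmul_extension hA hB hAB hL).
move=> L hL x hx eLB; have [_ [z [_ xz]]] := hx.
have [M hM eL] := invertible_principal_descent hA hB hAB hL xz eLB.
by exists M, x.
Qed.
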